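(* Let $X$ be an $R$-module, $S\subseteq X$ an $M$-$m$-system, and $P$ a submodule of $X$ maximal with respect to $P\cap S=\emptyset$. Then $P$ is an $M$-prime submodule of $X$.
   Context: $R$ is a ring with identity, modules are unital left $R$-modules, $M$ is a fixed left $R$-module. For $N\le M$ and a module $X$, $N\cdot X$ is the intersection of the kernels of all homomorphisms $X\to W$ where $W$ ranges over modules with $f(N)=0$ for all $f\in\mathrm{Hom}_R(M,W)$ (for $Z\le X$, $N\cdot Z$ is formed regarding $Z$ as a module). A proper submodule $P$ of $X$ is $M$-prime if for all $N\le M$, $Y\le X$, $N\cdot Y\subseteq P$ implies $N\cdot X\subseteq P$ or $Y\subseteq P$. A nonempty set $S\subseteq X\setminus\{0\}$ is an $M$-$m$-system if for every submodule $N\le M$ and all submodules $Y,Z\le X$: if $(Y+Z)\cap S\neq\emptyset$ and $(Y+N\cdot X)\cap S\neq\emptyset$, then $(Y+N\cdot Z)\cap S\neq\emptyset$. *)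

(* R : a ring with identity (pzRingType, possibly noncommutative);
   modules are unital left R-modules = lmodType R. Submodules are Prop-valued
   predicates closed under 0, + and scaling. *)
From HB Require Import structures.
From mathcomp Require Import all_boot all_order all_algebra.
Set Implicit Arguments. Unset Strict Implicit. Unset Printing Implicit Defensive.
Import GRing.Theory.
Local Open Scope ring_scope.

Section ModDefs.
Variable R : pzRingType.

Definition is_submodule (X : lmodType R) (A : X -> Prop) : Prop :=
  A 0 /\ (forall x y, A x -> A y -> A (x + y)) /\
  (forall (r : R) x, A x -> A (r *: x)).

Definition hom_on (X W : lmodType R) (Z : X -> Prop) (f : X -> W) : Prop :=
  (forall x y, Z x -> Z y -> f (x + y) = f x + f y) /\
  (forall (r : R) x, Z x -> f (r *: x) = r *: f x).

Definition is_hom (X W : lmodType R) (f : X -> W) : Prop :=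
  hom_on (fun _ => True) f.

Definition subm_sum (X : lmodType R) (A B : X -> Prop) : X -> Prop :=
  fun x => exists a b, A a /\ B b /\ x = a + b.

Definition prod_sub (M X : lmodType R) (N : M -> Prop) (Z : X -> Prop) : X -> Prop :=
  fun x => Z x /\
    forall W : lmodType R,
      (forall g : M -> W, is_hom g -> forall n, N n -> g n = 0) ->
      forall f : X -> W, hom_on Z f -> f x = 0.

Definition M_prime (M X : lmodType R) (P : X -> Prop) : Prop :=
  is_submodule P /\ (exists x, ~ P x) /\
  forall (N : M -> Prop) (Y : X -> Prop), is_submodule N -> is_submodule Y ->
    (forall x, prod_sub N Y x -> P x) ->
    (forall x, prod_sub N (fun _ => True) x -> P x) \/ (forall x, Y x -> P x).

Definition M_m_system (M X : lmodType R) (S : X -> Prop) : Prop :=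
  (exists s, S s) /\ (forall s, S s -> s <> 0) /\
  forall (N : M -> Prop) (Y Z : X -> Prop),
    is_submodule N -> is_submodule Y -> is_submodule Z ->
    (exists s, S s /\ subm_sum Y Z s) ->
    (exists s, S s /\ subm_sum Y (prod_sub N (fun _ => True)) s) ->
    exists s, S s /\ subm_sum Y (prod_sub N Z) s.

End ModDefs.

(* By maximality, every submodule Q containing P but not
   contained in P meets S (lemma [maximal_avoiding_meets]).  Suppose
   N.Y <= P while neither N.X <= P nor Y <= P.  Then both P + Y and
   P + N.X properly enlarge P, so both meet S; the m-system axiom applied
   to the submodules P and Y yields s in S with s in P + N.Y.  Since
   N.Y <= P, such an s lies in P, contradicting P /\ S = 0. *)
From mathcomp Require Import all_boot all_order all_algebra.
From Stdlib Require Import Classical.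
Set Implicit Arguments. Unset Strict Implicit. Unset Printing Implicit Defensive.
Import GRing.Theory.
Local Open Scope ring_scope.

Section SubmoduleFacts.
Variables (R : pzRingType) (X : lmodType R).

Lemma submodule_full : is_submodule (fun _ : X => True).
Proof. by split; [|split]. Qed.

Lemma subm_sum_submodule (A B : X -> Prop) :
  is_submodule A -> is_submodule B -> is_submodule (subm_sum A B).
Proof.
move=> [A0 [AD AZ]] [B0 [BD BZ]]; split; [|split].
- by exists 0, 0; rewrite addr0.
- move=> _ _ [a [b [Aa [Bb ->]]]] [a' [b' [Aa' [Bb' ->]]]].
  by exists (a + a'), (b + b'); rewrite addrACA; split; [exact: AD|split; [exact: BD|]].
- move=> r _ [a [b [Aa [Bb ->]]]].
  by exists (r *: a), (r *: b); rewrite scalerDr; split; [exact: AZ|split; [exact: BZ|]].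
Qed.

Lemma subm_sum_l (A B : X -> Prop) : is_submodule B -> forall x, A x -> subm_sum A B x.
Proof. by move=> [B0 _] x Ax; exists x, 0; rewrite addr0. Qed.

Lemma subm_sum_r (A B : X -> Prop) : is_submodule A -> forall x, B x -> subm_sum A B x.
Proof. by move=> [A0 _] x Bx; exists 0, x; rewrite add0r. Qed.

Lemma hom_on0 (W : lmodType R) (Z : X -> Prop) (f : X -> W) :
  Z 0 -> hom_on Z f -> f 0 = 0.
Proof.
move=> Z0 [fD _]; have := fD 0 0 Z0 Z0; rewrite addr0 => f00.
by apply: (addrI (f 0)); rewrite addr0 -f00.
Qed.

Lemma prod_sub_submodule (M : lmodType R) (N : M -> Prop) (Z : X -> Prop) :
  is_submodule Z -> is_submodule (prod_sub N Z).
Proof.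
move=> [Z0 [ZD ZZ]]; split; [|split].
- by split=> // W _ f; apply: hom_on0.
- move=> x y [Zx Hx] [Zy Hy]; split; first exact: ZD.
  move=> W HW f Hf; have [fD _] := Hf.
  by rewrite fD // (Hx W HW f Hf) (Hy W HW f Hf) addr0.
- move=> r x [Zx Hx]; split; first exact: ZZ.
  move=> W HW f Hf; have [_ fZ] := Hf.
  by rewrite fZ // (Hx W HW f Hf) scaler0.
Qed.

End SubmoduleFacts.

Lemma not_included_witness (T : Type) (A B : T -> Prop) :
  ~ (forall x, A x -> B x) -> exists x, A x /\ ~ B x.
Proof.
move=> notAB; apply: NNPP => noWit; apply: notAB => x Ax.
by apply: NNPP => nBx; apply: noWit; exists x.
Qed.

Section MaximalAvoiding.
Variables (R : pzRingType) (X : lmodType R) (S P : X -> Prop).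
Hypothesis P_submodule : is_submodule P.
Hypothesis P_maximal : forall Q : X -> Prop, is_submodule Q ->
  (forall x, P x -> Q x) -> (forall x, Q x -> ~ S x) -> forall x, Q x -> P x.

Lemma maximal_avoiding_meets (Q : X -> Prop) :
  is_submodule Q -> (forall x, P x -> Q x) -> ~ (forall x, Q x -> P x) ->
  exists s, S s /\ Q s.
Proof.
move=> HQ PQ notQP; apply: NNPP => noMeet; apply: notQP.
by apply: (P_maximal HQ PQ) => x Qx Sx; apply: noMeet; exists x.
Qed.

Lemma sum_meets (B : X -> Prop) :
  is_submodule B -> ~ (forall x, B x -> P x) -> exists s, S s /\ subm_sum P B s.
Proof.
move=> HB notBP; apply: maximal_avoiding_meets.
- exact: subm_sum_submodule.
- exact: subm_sum_l.
- move=> sumP; have [b [Bb nPb]] := not_included_witness notBP.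
  by apply: nPb; apply: sumP; apply: subm_sum_r.
Qed.

End MaximalAvoiding.

Theorem proposition2p15 (R : pzRingType) (M X : lmodType R)
    (S : X -> Prop) (P : X -> Prop) :
  M_m_system M S ->
  is_submodule P ->
  (forall x, P x -> ~ S x) ->
  (forall Q : X -> Prop, is_submodule Q -> (forall x, P x -> Q x) ->
     (forall x, Q x -> ~ S x) -> forall x, Q x -> P x) ->
  M_prime M P.
Proof.
move=> [[s0 Ss0] [_ m_system]] HP P_avoids P_maximal.
split; first exact: HP.
split; first by exists s0 => Ps0; exact: (P_avoids s0 Ps0 Ss0).
move=> N Y HN HY NY_in_P.
have [NX_in_P|notNX] := classic (forall x, prod_sub N (fun _ => True) x -> P x).
  by left.
right; apply: NNPP => notY.
have meetY := sum_meets HP P_maximal HY notY.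
have HNX := prod_sub_submodule N (@submodule_full _ X).
have meetNX := sum_meets HP P_maximal HNX notNX.
(* The m-system axiom produces s in S lying in P + N.Y, which is inside P. *)
have [s [Ss [a [b [Pa [NYb s_eq]]]]]] := m_system N P Y HN HP HY meetY meetNX.
have [_ [P_add _]] := HP.
by apply: (P_avoids _ _ Ss); rewrite s_eq; apply: P_add => //; apply: NY_in_P.
Qed.
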